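(* Let $K$ be a field, $X=\{x_1,\dots,x_n\}$, $H=\langle h_1,\dots,h_r\rangle\subseteq K[X]$ and $f\in K[X]$. Let $Y=\{x_1,\dots,x_d\}$ be a maximum-size set of independent variables for $H$ (so $d=\dim H$), let $Z=\{x_{d+1},\dots,x_n\}$, and let $H'=\langle h_1,\dots,h_r\rangle K(Y)[Z]$. Then $$\langle h_1,\dots,h_r,f\cdot t-1\rangle K[X,t]\cap K[Y]=\langle 0\rangle \quad\text{and}\quad \langle h_1,\dots,h_r,f\rangle K[X]\cap K[Y]=\langle 0\rangle$$ (with $t$ a new variable) if and only if $f$ is a non-zero zero divisor in $K(Y)[Z]/\sqrt{H'}$.
   Context: A set $Y=\{x_1,\dots,x_d\}\subseteq X$ is a maximum-size set of independent variables for $H$ if $H\cap K[Y]=\langle 0\rangle$ and for every subset $W\subseteq X$ with more than $d$ elements $H\cap K[W]\neq\langle 0\rangle$. $K(Y)$ is the field of rational functions in $x_1,\dots,x_d$, and $\sqrt{H'}$ is the radical of $H'$ in $K(Y)[Z]$. *)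

From HB Require Import structures.
From mathcomp Require Import all_boot all_order all_algebra.
From mathcomp Require Import fraction.
From mathcomp Require Import mpoly.
Set Implicit Arguments. Unset Strict Implicit. Unset Printing Implicit Defensive.
Import Order.TTheory GRing.Theory.
Local Open Scope ring_scope.

Definition in_vars (K : fieldType) (n : nat) (W : {set 'I_n}) (p : {mpoly K[n]}) : Prop :=
  forall mo : 'X_{1..n}, mo \in msupp p -> forall i : 'I_n, i \notin W -> mo i = 0%N.

Definition in_first_vars (K : fieldType) (n d : nat) (p : {mpoly K[n]}) : Prop :=
  forall mo : 'X_{1..n}, mo \in msupp p -> forall i : 'I_n, (d <= i)%N -> mo i = 0%N.

Definition in_ideal (R : comNzRingType) (r : nat) (h : 'I_r -> R) (p : R) : Prop :=
  exists g : 'I_r -> R, p = \sum_(i < r) g i * h i.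

Definition in_radical (R : comNzRingType) (r : nat) (h : 'I_r -> R) (p : R) : Prop :=
  exists k : nat, in_ideal h (p ^+ k).

Definition nonzero_zero_divisor_mod (R : comNzRingType) (I : R -> Prop) (a : R) : Prop :=
  ~ I a /\ exists b : R, ~ I b /\ I (a * b).

Definition max_indep_first (K : fieldType) (n d r : nat) (h : 'I_r -> {mpoly K[n]}) : Prop :=
  (forall p, in_ideal h p -> in_first_vars d p -> p = 0) /\
  (forall W : {set 'I_n}, (d < #|W|)%N ->
     exists p, in_ideal h p /\ in_vars W p /\ p != 0).

Definition KY (K : fieldType) (d : nat) := {fraction {mpoly K[d]}}.

(* the canonical map K[X] -> K(Y)[Z], X = Y ⊔ Z, with #|Y| = d and #|Z| = m *)
Definition to_KYZ (K : fieldType) (d m : nat) (p : {mpoly K[d + m]}) : {mpoly (KY K d)[m]} :=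
  mmap (fun c : K => (@FracField.tofrac {mpoly K[d]} (c%:MP))%:MP)
       (fun i : 'I_(d + m) => match split i with
                              | inl j => ((@FracField.tofrac {mpoly K[d]} 'X_j)%:MP)
                              | inr j => 'X_j
                              end) p.

(* the inclusion K[X] -> K[X, t], with t the last (new) variable *)
Definition to_Xt (K : fieldType) (n : nat) (p : {mpoly K[n]}) : {mpoly K[n.+1]} :=
  mmap (fun c : K => c%:MP) (fun i : 'I_n => 'X_(widen_ord (leqnSn n) i)) p.

Definition var_t (K : fieldType) (n : nat) : {mpoly K[n.+1]} := 'X_(@ord_max n).

From HB Require Import structures.
From mathcomp Require Import all_boot all_order all_algebra.
From mathcomp Require Import fraction mpoly generic_quotient ring.
From Stdlib Require Import Classical.
Set Implicit Arguments. Unset Strict Implicit. Unset Printing Implicit Defensive.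
Import GRing.Theory.
Local Open Scope ring_scope.

(* Put A := K(Y)[Z] and H' := H A.  An ideal I of K[X] meets K[Y]
   nontrivially iff 1 lies in I A (clear denominators), and the Rabinowitsch
   ideal <H, f t - 1> contracts to the saturation H : f^oo.  Hence the first
   condition says f is not in sqrt H', and the second says 1 is not in H' + (f).
   If f b lies in sqrt H' for some b outside it, 1 in H' + (f) would put b in
   sqrt H'.  Conversely, maximality of Y gives every variable z_j a nonzero
   polynomial relation over K(Y) modulo H', so A/H' is finite-dimensional and f
   satisfies some P(f) in H'; if f is not a zero divisor modulo sqrt H', cancel
   the powers of f in P(f) to get c + w f in sqrt H' with c a nonzero constant,
   whence 1 lies in H' + (f). *)

Section MmapTheory.
Variables (n : nat) (R S : comNzRingType).
Implicit Types (f : R -> S) (h : 'I_n -> S) (p : {mpoly R[n]}).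

Lemma mmap_ind (P : S -> Prop) (f : {rmorphism R -> S}) h p :
    (forall x y, P x -> P y -> P (x + y)) ->
    (forall x y, P x -> P y -> P (x * y)) ->
    (forall c, P (f c)) -> (forall i, P (h i)) -> P (mmap f h p).
Proof.
move=> PD PM Pf Ph.
have P0 : P 0 by rewrite -(rmorph0 f).
have P1 : P 1 by rewrite -(rmorph1 f).
have PX x k : P x -> P (x ^+ k).
  by move=> Px; elim: k => [|k IHk]; rewrite ?expr0 // exprS; apply: (PM).
apply: (big_ind P) => // mo _; apply: (PM) => //.
by rewrite /mmap1; apply: (big_ind P) => // i _; apply: PX.
Qed.

Lemma eq_mmap f1 f2 h1 h2 p : f1 =1 f2 -> h1 =1 h2 -> mmap f1 h1 p = mmap f2 h2 p.
Proof.
move=> ef eh; apply: eq_bigr => mo _.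
by rewrite ef (mmap1_eq _ eh).
Qed.

Lemma mmap_var (f : {rmorphism R -> S}) h i : mmap f h 'X_i = h i.
Proof. by rewrite mmapX mmap1U. Qed.

Lemma rmorph_mmap (T : comNzRingType) f h (psi : {rmorphism S -> T}) p :
  psi (mmap f h p) = mmap (psi \o f) (psi \o h) p.
Proof.
rewrite rmorph_sum; apply: eq_bigr => mo _.
rewrite rmorphM rmorph_prod; congr (_ * _).
by apply: eq_bigr => i _; rewrite rmorphXn.
Qed.

Lemma rmorph_mmapE (psi : {rmorphism {mpoly R[n]} -> S}) p :
  psi p = mmap (psi \o mpolyC n (R := R)) (fun i => psi 'X_i) p.
Proof.
rewrite {1}(mpolyE p) rmorph_sum; apply: eq_bigr => mo _.
rewrite -mul_mpolyC rmorphM mpolyXE_id rmorph_prod; congr (_ * _).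
by apply: eq_bigr => i _; rewrite rmorphXn.
Qed.

Lemma mpoly_rmorph_ext (psi1 psi2 : {rmorphism {mpoly R[n]} -> S}) :
    (forall c, psi1 c%:MP = psi2 c%:MP) -> (forall i, psi1 'X_i = psi2 'X_i) ->
  psi1 =1 psi2.
Proof.
by move=> eC eX p; rewrite (rmorph_mmapE psi1) (rmorph_mmapE psi2); apply: eq_mmap.
Qed.

End MmapTheory.

Lemma map_mpoly_inj n (R S : nzRingType) (f : {rmorphism R -> S}) :
  injective f -> injective (map_mpoly (n := n) f).
Proof.
by move=> inj_f p q e; apply/mpolyP => mo; apply: inj_f; rewrite -!mcoeff_map_mpoly e.
Qed.

Section Support.
Variables (K : fieldType) (n : nat) (Pr : pred 'I_n).

Definition supp_in (p : {mpoly K[n]}) : Prop :=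
  forall mo : 'X_{1..n}, mo \in msupp p -> forall i, ~~ Pr i -> mo i = 0%N.

Lemma supp_inC c : supp_in c%:MP.
Proof.
move=> mo; rewrite msuppC; case: (c == 0) => //.
by rewrite mem_seq1 => /eqP -> i _; rewrite mnm0E.
Qed.

Lemma supp_inX i : Pr i -> supp_in 'X_i.
Proof.
move=> Pi mo; rewrite msuppX mem_seq1 => /eqP -> j Pj.
by rewrite mnm1E; case: eqP => // eij; rewrite -eij Pi in Pj.
Qed.

Lemma supp_inD p q : supp_in p -> supp_in q -> supp_in (p + q).
Proof. by move=> sp sq mo /msuppD_le; rewrite mem_cat => /orP [/sp|/sq]. Qed.

Lemma supp_inM p q : supp_in p -> supp_in q -> supp_in (p * q).
Proof.
move=> sp sq mo /msuppM_le /allpairsP [[m1 m2] /= [h1 h2 ->]] i Pi.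
by rewrite mnmDE (sp _ h1 _ Pi) (sq _ h2 _ Pi).
Qed.

Lemma supp_in_mmap k (h : 'I_k -> {mpoly K[n]}) (p : {mpoly K[k]}) :
  (forall i, supp_in (h i)) -> supp_in (mmap (mpolyC n (R := K)) h p).
Proof.
move=> sh; apply: (mmap_ind (P := supp_in)) sh.
- exact: supp_inD.
- exact: supp_inM.
- exact: supp_inC.
Qed.

Lemma supp_in_mmapE p : supp_in p ->
  mmap (mpolyC n (R := K)) (fun i => if Pr i then 'X_i else 0) p = p.
Proof.
move=> sp; rewrite {2}(mpolyE p) /mmap big_seq [RHS]big_seq; apply: eq_bigr => mo Hmo.
rewrite -mmap1_id mul_mpolyC; congr (_ *: _); apply: eq_bigr => i _.
by case: ifP => // /negbT /(sp _ Hmo) ->; rewrite !expr0.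
Qed.

End Support.

Section FirstVars.
Variables (K : fieldType) (d N : nat) (le_dN : (d <= N)%N).
Implicit Types (c : {mpoly K[d]}) (p : {mpoly K[N]}).

Definition embed_first (c : {mpoly K[d]}) : {mpoly K[N]} :=
  mmap (mpolyC N (R := K)) (fun j => 'X_(widen_ord le_dN j)) c.
HB.instance Definition _ := GRing.RMorphism.copy embed_first embed_first.

Lemma embed_firstC a : embed_first a%:MP = a%:MP.
Proof. exact: mmapC. Qed.

Lemma embed_firstX j : embed_first 'X_j = 'X_(widen_ord le_dN j).
Proof. exact: mmap_var. Qed.

Definition restrict_first (p : {mpoly K[N]}) : {mpoly K[d]} :=
  mmap (mpolyC d (R := K))
    (fun i => if (insub (val i) : option 'I_d) is Some j then 'X_j else 0) p.

Lemma in_first_varsE p : in_first_vars d p <-> supp_in (fun i : 'I_N => (i < d)%N) p.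
Proof.
by split=> sp mo /sp Hmo i; [rewrite -leqNgt; apply: Hmo|rewrite leqNgt; apply: Hmo].
Qed.

Lemma in_first_vars_embed c : in_first_vars d (embed_first c).
Proof. by apply/in_first_varsE/supp_in_mmap => j; apply: supp_inX => /=. Qed.

Lemma restrict_firstK p : in_first_vars d p -> embed_first (restrict_first p) = p.
Proof.
move/in_first_varsE => sp; rewrite -[RHS](supp_in_mmapE sp) rmorph_mmap.
apply: eq_mmap => [c|i] /=; first exact: embed_firstC.
case: insubP => [j ltid ej|/negbTE ->]; last exact: rmorph0.
by rewrite ltid embed_firstX; congr 'X_[U_(_)]; apply: val_inj.
Qed.

End FirstVars.

Lemma mwiden_embed_first (K : fieldType) d N (le_dN : (d <= N)%N) (c : {mpoly K[d]}) :
  mwiden (embed_first le_dN c) = embed_first (leq_trans le_dN (leqnSn N)) c.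
Proof.
set le_dSN := leq_trans le_dN (leqnSn N).
change ((@mwiden _ _ \o embed_first le_dN) c = embed_first le_dSN c).
apply: mpoly_rmorph_ext => [a|j] /=; first by rewrite !embed_firstC mwidenC.
by rewrite !embed_firstX /mwiden mmap_var; congr 'X_[U_(_)]; apply: val_inj.
Qed.

HB.instance Definition _ (K : fieldType) (n : nat) :=
  GRing.RMorphism.copy (@to_Xt K n) (@mwiden n K).

Section Ideals.
Variables (R : comNzRingType) (r : nat) (g : 'I_r -> R).
Local Notation I := (in_ideal g).

Lemma in_ideal0 : I 0.
Proof. by exists (fun _ => 0); rewrite big1 // => i _; rewrite mul0r. Qed.

Lemma in_idealD p q : I p -> I q -> I (p + q).
Proof.
move=> [a ->] [b ->]; exists (fun i => a i + b i).
by rewrite -big_split /=; apply: eq_bigr => i _; rewrite mulrDl.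
Qed.

Lemma in_idealMl c p : I p -> I (c * p).
Proof.
move=> [a ->]; exists (fun i => c * a i).
by rewrite mulr_sumr; apply: eq_bigr => i _; rewrite mulrA.
Qed.

Lemma in_idealMr c p : I p -> I (p * c).
Proof. by rewrite mulrC; apply: in_idealMl. Qed.

Lemma in_ideal_gen i : I (g i).
Proof.
exists (fun j => (j == i)%:R); rewrite (bigD1 i) //= eqxx mul1r big1 ?addr0 //.
by move=> j /negbTE ->; rewrite mul0r.
Qed.

Lemma in_ideal_sum (J : Type) (s : seq J) (P : pred J) (G : J -> R) :
  (forall j, P j -> I (G j)) -> I (\sum_(j <- s | P j) G j).
Proof. exact: (big_ind I in_ideal0 in_idealD). Qed.

Lemma in_ideal_rmorph (S : comNzRingType) (psi : {rmorphism R -> S}) p :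
  I p -> in_ideal (fun i => psi (g i)) (psi p).
Proof.
move=> [a ->]; exists (fun i => psi (a i)).
by rewrite rmorph_sum; apply: eq_bigr => i _; rewrite rmorphM.
Qed.

Lemma in_radical_ideal p : I p -> in_radical g p.
Proof. by exists 1%N; rewrite expr1. Qed.

Definition invertible_mod (a : R) := exists i u, I i /\ 1 = i + u * a.

Lemma in_radical_cancel a b :
  invertible_mod a -> in_radical g (a * b) -> in_radical g b.
Proof.
move=> [i [u [Ii e1]]] [k abk]; exists k.
have -> : b ^+ k = (b ^+ k - (u * a * b) ^+ k) + u ^+ k * (a * b) ^+ k.
  by rewrite -exprMn mulrA subrK.
apply: in_idealD; last exact: in_idealMl.
rewrite subrXX; apply: in_idealMr.
by rewrite -{1}[b]mul1r e1 mulrDl addrK; apply: in_idealMr.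
Qed.

(* The binomial expansion gives [(c + w a)^k = c^k + a * _]. *)
Lemma invertible_mod_of_radical c c' w a :
  c' * c = 1 -> in_radical g (c + w * a) -> invertible_mod a.
Proof.
move=> c'c [k ck]; have := subrXX (c + w * a) c k.
rewrite addrAC subrr add0r; set s := \sum_(i < k) _ => /eqP.
rewrite subr_eq => /eqP eck.
exists (c' ^+ k * (c + w * a) ^+ k), (- (c' ^+ k * w * s)).
split; first exact: in_idealMl.
rewrite eck mulrDr -exprMn c'c expr1n mulNr -!mulrA [a * s]mulrC.
by rewrite addrAC subrr add0r.
Qed.

End Ideals.

Lemma eq_in_ideal (R : comNzRingType) r (g1 g2 : 'I_r -> R) p :
  g1 =1 g2 -> in_ideal g1 p <-> in_ideal g2 p.
Proof.
move=> eg; split=> [[a ->]|[a ->]]; exists a; apply: eq_bigr => i _; by rewrite eg.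
Qed.

Definition adjoin_gen (R : Type) r (h : 'I_r -> R) (g0 : R) : 'I_(r + 1) -> R :=
  fun i => match split i with inl j => h j | inr _ => g0 end.

Lemma rmorph_adjoin_gen (R S : comNzRingType) r (psi : {rmorphism R -> S})
    (h : 'I_r -> R) g0 i :
  psi (adjoin_gen h g0 i) = adjoin_gen (psi \o h) (psi g0) i.
Proof. by rewrite /adjoin_gen; case: split. Qed.

Lemma in_ideal_adjoin (R : comNzRingType) r (h : 'I_r -> R) g0 p :
  in_ideal (adjoin_gen h g0) p <->
  exists (a : 'I_r -> R) (c : R), p = \sum_(j < r) a j * h j + c * g0.
Proof.
have split_l j : split (lshift 1 j) = inl j := unsplitK (inl _ j).
have split_r : split (rshift r (@ord0 0)) = inr ord0 := unsplitK (inr _ ord0).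
split=> [[a ->]|[a [c ->]]].
  exists (fun j => a (lshift 1 j)), (a (rshift r ord0)).
  rewrite big_split_ord /= big_ord1 /adjoin_gen split_r; congr (_ + _).
  by apply: eq_bigr => j _; rewrite split_l.
exists (adjoin_gen a c).
rewrite big_split_ord /= big_ord1 /adjoin_gen split_r; congr (_ + _).
by apply: eq_bigr => j _; rewrite split_l.
Qed.

Section Localization.
Variables (R : idomainType) (f : R).
Local Notation tof := (@FracField.tofrac R).

Definition in_localization (I : R -> Prop) (x : {fraction R}) :=
  exists N a, I a /\ x * tof f ^+ N = tof a.

Local Notation in_Rf := (in_localization (fun _ => True)).

Variable I : R -> Prop.
Hypothesis ID : forall a b, I a -> I b -> I (a + b).
Hypothesis IM : forall a b, I b -> I (a * b).

Lemma in_localization_tofrac a : I a -> in_localization I (tof a).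
Proof. by exists 0%N, a; rewrite expr0 mulr1. Qed.

Lemma in_localizationD x y :
  in_localization I x -> in_localization I y -> in_localization I (x + y).
Proof.
move=> [N1 [a1 [Ia1 e1]]] [N2 [a2 [Ia2 e2]]].
exists (N1 + N2)%N, (f ^+ N2 * a1 + f ^+ N1 * a2).
split; first by apply: ID; apply: IM.
by rewrite exprD rmorphD !rmorphM /= !rmorphXn -e1 -e2; ring.
Qed.

Lemma in_localizationM x y :
  in_Rf x -> in_localization I y -> in_localization I (x * y).
Proof.
move=> [N1 [a1 [_ e1]]] [N2 [a2 [Ia2 e2]]]; exists (N1 + N2)%N, (a1 * a2).
by split; [apply: IM|rewrite exprD rmorphM /= -e1 -e2 mulrACA].
Qed.

End Localization.

Lemma in_localization_invf (R : idomainType) (f : R) : f != 0 ->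
  in_localization f (fun _ => True) (FracField.tofrac f)^-1.
Proof. by move=> nzf; exists 1%N, 1; rewrite expr1 mulVf ?tofrac1 ?tofrac_eq0. Qed.

Section Rabinowitsch.
Variables (K : fieldType) (n r : nat) (h : 'I_r -> {mpoly K[n]}) (f : {mpoly K[n]}).
Local Notation tof := (@FracField.tofrac {mpoly K[n]}).

Definition eval_inv (p : {mpoly K[n.+1]}) : {fraction {mpoly K[n]}} :=
  mmap (tof \o mpolyC n (R := K))
    (fun i => if (insub (val i) : option 'I_n) is Some j then tof 'X_j
              else (tof f)^-1) p.
HB.instance Definition _ := GRing.RMorphism.copy eval_inv eval_inv.

Lemma eval_inv_to_Xt p : eval_inv (to_Xt p) = tof p.
Proof.
change ((eval_inv \o @to_Xt K n) p = tof p); apply: mpoly_rmorph_ext => [c|i] /=.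
  by rewrite /to_Xt /eval_inv !mmapC.
rewrite /to_Xt /eval_inv !mmap_var.
case: insubP => [j _ ej|]; last by rewrite /= ltn_ord.
by congr (tof 'X_[U_(_)]); apply: val_inj.
Qed.

Lemma eval_inv_t : eval_inv (var_t K n) = (tof f)^-1.
Proof. by rewrite /eval_inv mmap_var; case: insubP => [j|] //=; rewrite ltnn. Qed.

Lemma in_localization_eval_inv p : f != 0 ->
  in_localization f (fun _ => True) (eval_inv p).
Proof.
move=> nzf; apply: mmap_ind => [x y|x y|c|i].
- exact: in_localizationD.
- exact: in_localizationM.
- exact: in_localization_tofrac.
case: insubP => [j _ _|_]; first exact: in_localization_tofrac.
exact: in_localization_invf.
Qed.

Lemma in_rabinowitsch_ideal q :
  in_ideal (adjoin_gen (fun j => to_Xt (h j)) (to_Xt f * var_t K n - 1)) (to_Xt q) <->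
  exists N, in_ideal h (q * f ^+ N).
Proof.
set t := var_t K n; set x := to_Xt f * t; rewrite in_ideal_adjoin; split.
  move=> [a [c eq]]; have [->|nzf] := eqVneq f 0.
    by exists 1%N; rewrite expr1 mulr0; apply: in_ideal0.
  have := congr1 eval_inv eq; rewrite eval_inv_to_Xt rmorphD rmorphM rmorphB rmorph1.
  rewrite /x rmorphM /= eval_inv_to_Xt eval_inv_t mulfV ?tofrac_eq0 //.
  rewrite subrr mulr0 addr0 rmorph_sum => eq'.
  have : in_localization f (in_ideal h) (tof q).
    rewrite eq'; apply: (big_ind (in_localization f (in_ideal h))).
    - exact/in_localization_tofrac/in_ideal0.
    - by apply: in_localizationD => *; [apply: in_idealD|apply: in_idealMl].
    move=> j _; rewrite rmorphM /= eval_inv_to_Xt.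
    apply: in_localizationM; [exact: in_idealMl|exact: in_localization_eval_inv|].
    exact/in_localization_tofrac/in_ideal_gen.
  move=> [N [b [Ib]]]; rewrite -rmorphXn -rmorphM => /eqP.
  by rewrite tofrac_eq => /eqP eb; exists N; rewrite eb.
move=> [N [b eb]].
exists (fun j => to_Xt (b j) * t ^+ N), (- to_Xt q * \sum_(i < N) x ^+ i).
have -> : \sum_(j < r) to_Xt (b j) * t ^+ N * to_Xt (h j) = to_Xt q * x ^+ N.
  rewrite /x exprMn mulrA -rmorphXn -rmorphM eb rmorph_sum mulr_suml.
  by apply: eq_bigr => j _; rewrite rmorphM /= mulrAC.
by rewrite -mulrA [_ * (x - 1)]mulrC -subrX1 mulNr mulrBr mulr1 opprB addrC subrK.
Qed.

End Rabinowitsch.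

Lemma exists_tofrac_div (R : idomainType) (x : {fraction R}) :
  exists a b : R, b != 0 /\ x = FracField.tofrac a / FracField.tofrac b.
Proof.
elim/quotW: x => y; exists y.1, y.2; split; first exact: denom_ratioP.
have nz2 : FracField.tofrac y.2 != 0 by rewrite tofrac_eq0 denom_ratioP.
apply: (mulIf nz2); rewrite mulfVK //; unlock FracField.tofrac.
rewrite -[_ * _]/(FracField.mul _ _) -FracField.pi_mul; apply/eqmodP => /=.
rewrite FracField.equivfE /FracField.mulf /=.
by rewrite !numden_Ratio ?mulr1 ?mul1r ?oner_neq0 ?denom_ratioP // mulrC.
Qed.

Section RationalFunctionCoefficients.
Variables (K : fieldType) (d m : nat).
Local Notation P := {mpoly K[d + m]}.
Local Notation A := {mpoly (KY K d)[m]}.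
Local Notation Q := {mpoly {mpoly K[d]}[m]}.
Local Notation tof := (@FracField.tofrac {mpoly K[d]}).
Local Notation iotaY := (embed_first (leq_addr m d)).

Definition KYZ_var (i : 'I_(d + m)) : A :=
  match split i with inl j => (tof 'X_j)%:MP | inr j => 'X_j end.

Lemma to_KYZE :
  @to_KYZ K d m =1 mmap (mpolyC m (R := KY K d) \o tof \o mpolyC d (R := K)) KYZ_var.
Proof. by []. Qed.

HB.instance Definition _ := GRing.RMorphism.copy (@to_KYZ K d m)
  (mmap (mpolyC m (R := KY K d) \o tof \o mpolyC d (R := K)) KYZ_var).

Lemma to_KYZ_lshift (k : 'I_d) : to_KYZ 'X_(lshift m k) = (tof 'X_k)%:MP :> A.
Proof. by rewrite to_KYZE mmap_var /KYZ_var (unsplitK (inl _ k)). Qed.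

Lemma to_KYZ_embed c : to_KYZ (iotaY c) = (tof c)%:MP.
Proof.
change ((@to_KYZ K d m \o iotaY) c = (mpolyC m (R := KY K d) \o tof) c).
apply: mpoly_rmorph_ext => [a|j] /=.
  by rewrite embed_firstC to_KYZE mmapC.
rewrite embed_firstX -to_KYZ_lshift; congr (to_KYZ 'X_[U_(_)]); exact: val_inj.
Qed.

Lemma to_KYZ_rshift (j : 'I_m) : to_KYZ 'X_(rshift d j) = 'X_j :> A.
Proof. by rewrite to_KYZE mmap_var /KYZ_var (unsplitK (inr _ j)). Qed.

Definition split_vars (p : P) : Q :=
  mmap (mpolyC m (R := {mpoly K[d]}) \o mpolyC d (R := K))
    (fun i => match split i with inl j => ('X_j)%:MP | inr j => 'X_j end) p.
HB.instance Definition _ := GRing.RMorphism.copy split_vars split_vars.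

Definition join_vars (q : Q) : P := mmap iotaY (fun j => 'X_(rshift d j)) q.
HB.instance Definition _ := GRing.RMorphism.copy join_vars join_vars.

Lemma split_varsK : cancel split_vars join_vars.
Proof.
move=> p; change ((join_vars \o split_vars) p = idfun p).
apply: mpoly_rmorph_ext => [c|i] /=.
  by rewrite /split_vars mmapC /= /join_vars mmapC /= embed_firstC.
rewrite /split_vars mmap_var /join_vars; case: splitP => j ij.
  rewrite mmapC /= embed_firstX; congr 'X_[U_(_)]; exact: val_inj.
by rewrite mmap_var; congr 'X_[U_(_)]; apply: val_inj.
Qed.

Lemma to_KYZ_join q : to_KYZ (join_vars q) = map_mpoly tof q.
Proof.
change ((@to_KYZ K d m \o join_vars) q = map_mpoly tof q).
apply: mpoly_rmorph_ext => [c|j] /=.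
  by rewrite /join_vars mmapC to_KYZ_embed map_mpolyC.
by rewrite /join_vars mmap_var to_KYZ_rshift /map_mpoly mmap_var.
Qed.

Lemma to_KYZ_split p : to_KYZ p = map_mpoly tof (split_vars p).
Proof. by rewrite -{1}(split_varsK p) to_KYZ_join. Qed.

Lemma to_KYZ_inj : injective (@to_KYZ K d m).
Proof.
move=> p1 p2; rewrite (to_KYZ_split p1) (to_KYZ_split p2).
move/map_mpoly_inj => e; apply: (can_inj split_varsK); apply: e => x y /eqP.
by rewrite tofrac_eq => /eqP.
Qed.

Lemma clear_denominator (a : A) :
  exists2 D : {mpoly K[d]}, D != 0 & exists q : Q, map_mpoly tof q = (tof D)%:MP * a.
Proof.
elim/mpolyind: a => [|c mo a _ _ [D nzD [q eq]]].
  by exists 1; [exact: oner_neq0|exists 0; rewrite mulr0 rmorph0].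
have [x [y [nzy ->]]] := exists_tofrac_div c.
have nzy' : tof y != 0 by rewrite tofrac_eq0.
exists (y * D); first by rewrite mulf_neq0.
exists ((x * D)%:MP * 'X_[mo] + y%:MP * q).
rewrite rmorphD !rmorphM /= !map_mpolyC map_mpolyX eq mulrDr.
rewrite -!mul_mpolyC !mulrA -!rmorphM /=; congr (_ * _ + _).
by congr (_%:MP); rewrite !rmorphM /= mulrAC [tof y * _]mulrC mulfVK.
Qed.

Lemma clear_denominators (T : finType) (a : T -> A) :
  exists2 D : {mpoly K[d]}, D != 0 &
    exists b : T -> P, forall i, to_KYZ (b i) = (tof D)%:MP * a i.
Proof.
have /fin_all_exists [Dq hDq] : forall i, exists Dq : {mpoly K[d]} * P,
    Dq.1 != 0 /\ to_KYZ Dq.2 = (tof Dq.1)%:MP * a i.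
  move=> i; have [D nzD [q eq]] := clear_denominator (a i).
  by exists (D, join_vars q); rewrite /= to_KYZ_join.
exists (\prod_i (Dq i).1).
  by rewrite prodf_seq_neq0; apply/allP => i _; case: (hDq i).
exists (fun i => (Dq i).2 * iotaY (\prod_(j | j != i) (Dq j).1)) => i.
rewrite rmorphM /= to_KYZ_embed [in RHS](bigD1 i) //= (proj2 (hDq i)).
by rewrite !rmorphM /= mulrAC.
Qed.

Lemma in_ideal_to_KYZ r (g : 'I_r -> P) (a : P) :
  in_ideal (fun i => to_KYZ (g i)) (to_KYZ a) <->
  exists2 D : {mpoly K[d]}, D != 0 & in_ideal g (iotaY D * a).
Proof.
split=> [[c ea]|[D nzD /(in_ideal_rmorph (@to_KYZ K d m))]].
  have [D nzD [b eb]] := clear_denominators c.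
  exists D => //; exists b; apply: to_KYZ_inj.
  rewrite rmorphM /= to_KYZ_embed ea rmorph_sum mulr_sumr.
  by apply: eq_bigr => i _; rewrite rmorphM /= eb mulrA.
rewrite rmorphM /= to_KYZ_embed => /(in_idealMl ((tof D)^-1)%:MP).
by rewrite mulrA -rmorphM /= mulVf ?tofrac_eq0 // rmorph1 mul1r.
Qed.

End RationalFunctionCoefficients.

Section AlgebraicModIdeal.
Variables (F : fieldType) (m r : nat) (g : 'I_r -> {mpoly F[m]}).
Local Notation A := {mpoly F[m]}.
Local Notation I := (in_ideal g).

Definition peval (x : A) (P : {poly F}) : A := (map_poly (mpolyC m (R := F)) P).[x].
HB.instance Definition _ (x : A) := GRing.RMorphism.copy (peval x)
  (horner_eval x \o map_poly (mpolyC m (R := F))).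

Lemma pevalE x P : peval x P = \sum_(k < size P) (P`_k)%:MP * x ^+ k.
Proof.
rewrite /peval horner_coef size_map_poly.
by apply: eq_bigr => k _; rewrite coef_map.
Qed.

Lemma pevalX x : peval x 'X = x.
Proof. by rewrite /peval map_polyX hornerX. Qed.

Lemma pevalC x c : peval x c%:P = c%:MP.
Proof. by rewrite /peval map_polyC hornerC. Qed.

Lemma peval_poly x n (E : nat -> F) :
  peval x (\poly_(k < n) E k) = \sum_(k < n) (E k)%:MP * x ^+ k.
Proof.
rewrite /peval -(horner_poly n (fun k => (E k)%:MP) x); congr horner.
apply/polyP => k.
by rewrite coef_map !coef_poly; case: ifP; rewrite ?rmorph0.
Qed.

Lemma monic_relation x P : P != 0 -> I (peval x P) ->
  exists B (e : nat -> F), I (x ^+ B - \sum_(k < B) (e k)%:MP * x ^+ k).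
Proof.
move=> nzP IP; set B := (size P).-1; set lc := lead_coef P.
have eB : size P = B.+1 by rewrite prednK // lt0n size_poly_eq0.
have nzlc : lc != 0 by rewrite lead_coef_eq0.
exists B, (fun k => - P`_k / lc).
have -> : x ^+ B - \sum_(k < B) (- P`_k / lc)%:MP * x ^+ k = (lc^-1)%:MP * peval x P.
  rewrite pevalE mulr_sumr eB big_ord_recr /= addrC; congr (_ + _).
    by rewrite mulrA -rmorphM /= /lc lead_coefE eB mulVf // mpolyC1 mul1r.
  rewrite -sumrN; apply: eq_bigr => k _.
  by rewrite mulrA -rmorphM /= [lc^-1 * _]mulrC -mulNr -rmorphN /= mulNr opprK.
exact: in_idealMl.
Qed.

Section Reduction.
Variables (B : 'I_m -> nat) (e : 'I_m -> nat -> F).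
Hypothesis relB : forall j, I ('X_j ^+ B j - \sum_(k < B j) (e j k)%:MP * 'X_j ^+ k).

Local Notation bnd := (\sum_j B j).+1.
Local Notation S := 'X_{1..m < bnd}.

Definition lowdeg_rep (b : A) :=
  exists v : {ffun S -> F}, I (b - \sum_s (v s)%:MP * 'X_[s]).

Lemma lowdeg_rep0 : lowdeg_rep 0.
Proof.
exists [ffun => 0]; rewrite big1 ?subr0; first exact: in_ideal0.
by move=> s _; rewrite ffunE mpolyC0 mul0r.
Qed.

Lemma lowdeg_repD b1 b2 : lowdeg_rep b1 -> lowdeg_rep b2 -> lowdeg_rep (b1 + b2).
Proof.
move=> [v1 h1] [v2 h2]; exists [ffun s => v1 s + v2 s].
rewrite (eq_bigr (fun s => (v1 s)%:MP * 'X_[s] + (v2 s)%:MP * 'X_[s])); last first.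
  by move=> s _; rewrite ffunE mpolyCD mulrDl.
by rewrite big_split opprD addrACA; apply: in_idealD.
Qed.

Lemma lowdeg_repMC c b : lowdeg_rep b -> lowdeg_rep (c%:MP * b).
Proof.
move=> [v hv]; exists [ffun s => c * v s].
rewrite (eq_bigr (fun s => c%:MP * ((v s)%:MP * 'X_[s]))); last first.
  by move=> s _; rewrite ffunE mpolyCM mulrA.
by rewrite -mulr_sumr -mulrBr; apply: in_idealMl.
Qed.

Lemma lowdeg_repI i b : I i -> lowdeg_rep b -> lowdeg_rep (i + b).
Proof. by move=> hi [v hv]; exists v; rewrite -addrA; apply: in_idealD. Qed.

(* Induction on the degree: a variable [x_j] of too high degree is lowered by
   the relation of [x_j]. *)
Lemma lowdeg_repX mo : lowdeg_rep 'X_[mo].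
Proof.
have [N] := ubnP (mdeg mo); elim: N mo => // N IH mo hmo.
have [lt|ge] := ltnP (mdeg mo) bnd.
  pose s0 : S := BMultinom lt.
  pose v (s : S) : F := if s == s0 then 1 else 0.
  exists (finfun v); rewrite (bigD1 s0) //=.
  have -> : \sum_(s | s != s0) ((finfun v) s)%:MP * 'X_[s] = 0.
    by apply: big1 => s /negbTE ns; rewrite (ffunE v s) /v ns mpolyC0 mul0r.
  rewrite (ffunE v s0) /v eqxx mpolyC1 mul1r addr0 subrr; exact: in_ideal0.
have [j hj] : exists j, (B j <= mo j)%N.
  apply/existsP; apply: contraLR ge; rewrite negb_exists => /forallP hall.
  rewrite -ltnNge ltnS mdegE; apply: leq_sum => j _.
  by have := hall j; rewrite -ltnNge => /ltnW.
set mo' := (mo - U_(j) *+ B j)%MM.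
have emo : mo = (mo' + U_(j) *+ B j)%MM.
  apply/mnmP => i; rewrite mnmDE mnmBE mulmnE mnm1E.
  by case: eqP => [<-|_]; [rewrite mul1n subnK|rewrite !mul0n subn0 addn0].
have -> : 'X_[mo] = 'X_[mo'] * ('X_j ^+ B j - \sum_(k < B j) (e j k)%:MP * 'X_j ^+ k)
                    + \sum_(k < B j) (e j k)%:MP * 'X_[mo' + U_(j) *+ k].
  have -> : \sum_(k < B j) (e j k)%:MP * 'X_[mo' + U_(j) *+ k] =
            'X_[mo'] * \sum_(k < B j) (e j k)%:MP * 'X_j ^+ k.
    by rewrite mulr_sumr; apply: eq_bigr => k _; rewrite mpolyXD -mpolyXn mulrCA.
  by rewrite mulrBr subrK {1}emo mpolyXD mpolyXn.
apply: lowdeg_repI; first exact: in_idealMl.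
apply: (big_ind lowdeg_rep) => [|x y|k _]; [exact: lowdeg_rep0|exact: lowdeg_repD|].
apply/lowdeg_repMC/IH; rewrite -ltnS (leq_trans _ hmo) // ltnS emo !mdegD.
by rewrite !mdegMn mdeg1 !mul1n ltn_add2l.
Qed.

Lemma lowdeg_rep_all b : lowdeg_rep b.
Proof.
elim/mpolyind: b => [|c mo b _ _ hb]; first exact: lowdeg_rep0.
by apply: lowdeg_repD => //; rewrite -mul_mpolyC; apply/lowdeg_repMC/lowdeg_repX.
Qed.

End Reduction.

Lemma algebraic_of_finite_span (S : finType) (X : S -> A) a :
    (forall b, exists v : {ffun S -> F}, I (b - \sum_s (v s)%:MP * X s)) ->
  exists2 P : {poly F}, P != 0 & I (peval a P).
Proof.
move=> span; set N := #|S|.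
have /fin_all_exists [V hV] : forall k : 'I_N.+1,
    exists v : {ffun S -> F}, I (a ^+ k - \sum_s (v s)%:MP * X s) by move=> k.
pose M := \matrix_(k < N.+1, i < N) V k (enum_val i).
have [w /sub_kermxP wM nzw] : exists2 w : 'rV_N.+1, (w <= kermx M)%MS & w != 0.
  apply/rowV0Pn; rewrite kermx_eq0; apply/negP => /eqP rkM.
  by have := rank_leq_col M; rewrite rkM ltnn.
exists (\poly_(k < N.+1) w 0 (inord k)).
  apply: contraNneq nzw => w0; apply/eqP/rowP => k.
  have := congr1 (fun P : {poly F} => P`_k) w0.
  by rewrite /= coef_poly ltn_ord inord_val coef0 mxE.
rewrite peval_poly; under eq_bigr do rewrite inord_val.
have sum0 : \sum_(k < N.+1) (w 0 k)%:MP * \sum_s (V k s)%:MP * X s = 0.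
  rewrite (eq_bigr (fun k => \sum_s (w 0 k * V k s)%:MP * X s)); last first.
    by move=> k _; rewrite mulr_sumr; apply: eq_bigr => s _; rewrite mulrA -rmorphM.
  rewrite exchange_big /= big1 // => s _; rewrite -mulr_suml -rmorph_sum /=.
  have -> : \sum_(k < N.+1) w 0 k * V k s = (w *m M) 0 (enum_rank s).
    by rewrite mxE; apply: eq_bigr => k _; rewrite mxE enum_rankK.
  by rewrite wM mxE mpolyC0 mul0r.
rewrite -[X in I X]subr0 -{2}sum0 -sumrB.
by apply: in_ideal_sum => k _; rewrite -mulrBr; apply: in_idealMl.
Qed.

Lemma algebraic_mod_ideal :
    (forall j : 'I_m, exists2 P : {poly F}, P != 0 & I (peval 'X_j P)) ->
  forall a, exists2 P : {poly F}, P != 0 & I (peval a P).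
Proof.
move=> rel a; have /fin_all_exists [Be hBe] : forall j : 'I_m,
    exists Be : nat * (nat -> F),
      I ('X_j ^+ Be.1 - \sum_(k < Be.1) (Be.2 k)%:MP * 'X_j ^+ k).
  by move=> j; have [P nzP /(monic_relation nzP) [B [e]]] := rel j; exists (B, e).
pose bnd := (\sum_j (Be j).1).+1.
apply: (algebraic_of_finite_span (X := fun s : 'X_{1..m < bnd} => 'X_[s])).
exact: (lowdeg_rep_all (B := fun j => (Be j).1) (e := fun j => (Be j).2) hBe).
Qed.

Lemma invertible_mod_of_algebraic a P :
    (forall b, in_radical g (a * b) -> in_radical g b) -> P != 0 -> I (peval a P) ->
  invertible_mod g a.
Proof.
move=> nzd nzP IP; have [k [Q nQ0 eP]] := multiplicity_XsubC P 0.
rewrite nzP /= in nQ0.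
have JQ : in_radical g (peval a Q).
  move: IP; rewrite eP subr0 rmorphM rmorphXn /= pevalX => /in_radical_ideal.
  clear eP; by elim: k => [|k IHk]; [rewrite expr0 mulr1|rewrite exprS mulrCA => /nzd].
have /factor_theorem [Q1 eQ1] : root (Q - (Q.[0])%:P) 0.
  by rewrite /root hornerD hornerN hornerC subrr.
move: JQ; rewrite -(subrK (Q.[0])%:P Q) eQ1 subr0 addrC.
rewrite rmorphD rmorphM /= pevalC pevalX.
by apply: (invertible_mod_of_radical (c' := (Q.[0]^-1)%:MP)); rewrite -rmorphM mulVf.
Qed.

End AlgebraicModIdeal.

Lemma invertible_mod_adjoin (R : comNzRingType) r (g : 'I_r -> R) a :
  invertible_mod g a <-> in_ideal (adjoin_gen g a) 1.
Proof.
rewrite in_ideal_adjoin; split=> [[_ [u [[b ->] e1]]]|[b [u e1]]]; first by exists b, u.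
by exists (\sum_(j < r) b j * g j), u; split=> //; exists b.
Qed.

Section Theorem3.
Variables (K : fieldType) (d m r : nat) (h : 'I_r -> {mpoly K[d + m]}).
Local Notation iotaY := (embed_first (leq_addr m d)).
Local Notation hKYZ := (fun i => to_KYZ (h i)).
Local Notation tof := (@FracField.tofrac {mpoly K[d]}).

Lemma embed_first_eq0 (c : {mpoly K[d]}) : (iotaY c == 0) = (c == 0).
Proof.
by rewrite -(inj_eq (@to_KYZ_inj K d m)) rmorph0 to_KYZ_embed mpolyC_eq0 tofrac_eq0.
Qed.

Lemma first_vars_to_Xt (p : {mpoly K[(d + m).+1]}) :
  in_first_vars d p -> p = to_Xt (iotaY (restrict_first d p)).
Proof.
move=> Fp; rewrite -{1}(restrict_firstK (leq_trans (leq_addr m d) (leqnSn _)) Fp).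
by rewrite -mwiden_embed_first.
Qed.

Lemma rabinowitsch_meet_eq0 f :
  (forall p, in_ideal (adjoin_gen (fun j => to_Xt (h j))
                                   (to_Xt f * var_t K (d + m) - 1)) p ->
     in_first_vars d p -> p = 0) <->
  ~ in_radical hKYZ (to_KYZ f).
Proof.
split=> [meet0 [N]|nJ p Ip /first_vars_to_Xt ep].
  rewrite -rmorphXn => /in_ideal_to_KYZ [D nzD ID].
  have /eqP : to_Xt (iotaY D) = 0.
    apply: meet0; first by apply/in_rabinowitsch_ideal; exists N.
    by rewrite /to_Xt -/(mwiden _) mwiden_embed_first; apply: in_first_vars_embed.
  rewrite -(rmorph0 (@to_Xt K (d + m))) (inj_eq (@inj_mwiden _ _)).
  by rewrite embed_first_eq0 (negbTE nzD).
move: Ip; rewrite ep => /in_rabinowitsch_ideal [N IN].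
have [-> | nzc] := eqVneq (restrict_first d p) 0; first by rewrite !rmorph0.
case: nJ; exists N; rewrite -rmorphXn; apply/in_ideal_to_KYZ.
by exists (restrict_first d p).
Qed.

Lemma adjoin_meet_eq0 f :
  (forall p, in_ideal (adjoin_gen h f) p -> in_first_vars d p -> p = 0) <->
  ~ invertible_mod hKYZ (to_KYZ f).
Proof.
have eqI a : in_ideal (adjoin_gen hKYZ (to_KYZ f)) a <->
             in_ideal (fun i => to_KYZ (adjoin_gen h f i)) a.
  by apply: eq_in_ideal => i; rewrite rmorph_adjoin_gen.
split=> [meet0 /invertible_mod_adjoin /eqI|ninv p Ip Fp].
  rewrite -(rmorph1 (@to_KYZ K d m)) => /in_ideal_to_KYZ [D nzD].
  rewrite mulr1 => /meet0.
  move=> /(_ (@in_first_vars_embed K d (d + m) (leq_addr m d) D)) /eqP.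
  by rewrite embed_first_eq0 (negbTE nzD).
rewrite -(restrict_firstK (leq_addr m d) Fp) in Ip *.
have [-> | nzc] := eqVneq (restrict_first d p) 0; first exact: rmorph0.
case: ninv; apply/invertible_mod_adjoin/eqI; rewrite -(rmorph1 (@to_KYZ K d m)).
by apply/in_ideal_to_KYZ; exists (restrict_first d p); rewrite // mulr1.
Qed.

Lemma to_KYZ_in_var_poly (j : 'I_m) p :
  in_vars (rshift d j |: [set lshift m i | i : 'I_d]) p ->
  exists Q : {poly KY K d}, to_KYZ p = peval 'X_j Q.
Proof.
move=> Wp; rewrite -(supp_in_mmapE Wp) rmorph_mmap.
apply: (mmap_ind (P := fun a => exists Q, a = peval 'X_j Q)).
all: rewrite /=.
- by move=> _ _ [Q1 ->] [Q2 ->]; exists (Q1 + Q2); rewrite rmorphD.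
- by move=> _ _ [Q1 ->] [Q2 ->]; exists (Q1 * Q2); rewrite rmorphM.
- by move=> c; exists (tof c%:MP)%:P; rewrite pevalC to_KYZE mmapC.
move=> i; case: ifP => [|_]; last by exists 0; rewrite !rmorph0.
rewrite in_setU1 => /orP [/eqP -> | /imsetP [k _ ->]].
  by exists 'X; rewrite pevalX to_KYZ_rshift.
by exists (tof 'X_k)%:P; rewrite pevalC to_KYZ_lshift.
Qed.

Lemma algebraic_to_KYZ :
    (forall W : {set 'I_(d + m)}, (d < #|W|)%N ->
       exists p, in_ideal h p /\ in_vars W p /\ p != 0) ->
  forall a, exists2 Q : {poly KY K d}, Q != 0 & in_ideal hKYZ (peval a Q).
Proof.
move=> hmax a; apply: algebraic_mod_ideal => j.
set W := rshift d j |: [set lshift m i | i : 'I_d].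
have cW : (d < #|W|)%N.
  have nin : rshift d j \notin [set lshift m i | i : 'I_d].
    by apply/imsetP => [[i _ /eqP]]; rewrite eq_rlshift.
  by rewrite cardsU1 nin card_imset ?card_ord //; apply: lshift_inj.
have [p [Ip [Wp nzp]]] := hmax W cW; have [Q eQ] := to_KYZ_in_var_poly Wp.
exists Q; last by rewrite -eQ; apply: in_ideal_rmorph.
apply: contraNneq nzp => Q0; apply/eqP/(@to_KYZ_inj K d m).
by rewrite eQ Q0 !rmorph0.
Qed.

End Theorem3.

Theorem theorem3 (K : fieldType) (d m r : nat) (h : 'I_r -> {mpoly K[d + m]})
    (f : {mpoly K[d + m]}) :
  max_indep_first d h ->
  ((forall p : {mpoly K[(d + m).+1]},
       in_ideal (fun i : 'I_(r + 1) =>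
                   match split i with
                   | inl j => to_Xt (h j)
                   | inr _ => to_Xt f * var_t K (d + m) - 1
                   end) p ->
       in_first_vars d p -> p = 0) /\
   (forall p : {mpoly K[d + m]},
       in_ideal (fun i : 'I_(r + 1) =>
                   match split i with
                   | inl j => h j
                   | inr _ => f
                   end) p ->
       in_first_vars d p -> p = 0))
  <->
  nonzero_zero_divisor_mod (in_radical (fun i : 'I_r => to_KYZ (h i))) (to_KYZ f).
Proof.
move=> [_ hmax]; split=> [[/rabinowitsch_meet_eq0 nJ /adjoin_meet_eq0 ninv]|].
  split; first exact: nJ.
  apply: NNPP => nzd; apply: ninv.
  have [Q nzQ IQ] := algebraic_to_KYZ hmax (to_KYZ f).
  apply: (invertible_mod_of_algebraic _ nzQ IQ) => b Jfb.
  by apply: NNPP => nJb; apply: nzd; exists b; exact: (conj nJb Jfb).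
move=> [nJ [b [nJb Jfb]]]; split; first exact/rabinowitsch_meet_eq0.
by apply/adjoin_meet_eq0 => inv; apply/nJb/(in_radical_cancel inv Jfb).
Qed.
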